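(* Consider the equation $u_{tx}=u-i|u|^2u_x$. Let $k,\Omega,c\in\mathbb{R}$ with $c\neq0$, and let $\varphi,\theta:\mathbb{R}\to\mathbb{R}$ be smooth with $\varphi(y)\neq0$ for all $y$. Suppose $u(x,t)=\varphi(y)e^{i(kx-\Omega t+\theta(y))}$, $y=x-ct$, solves this equation. Then there exist constants $A,B\in\mathbb{R}$ such that $$\theta_y=\frac{\varphi^4-2ck\varphi^2-2\Omega\varphi^2+4A}{4c\varphi^2}$$ and $$\varphi_y^2=-\frac{1}{16c^2}V(\varphi),\qquad V(\varphi)=\frac{\varphi^8+c_3\varphi^6+c_2\varphi^4+c_1\varphi^2+c_0}{\varphi^2},$$ where $c_3=4ck-4\Omega$, $c_2=4\left(c^2k^2+\Omega^2+2A+c(4-2k\Omega)\right)$, $c_1=-32Bc$, $c_0=16A^2$. *)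

From Stdlib Require Import Reals.
Open Scope R_scope.

Definition smooth (f : R -> R) : Prop :=
  exists D : nat -> R -> R,
    D O = f /\ forall (n : nat) (x : R), derivable_pt_lim (D n) x (D (S n) x).

(* Complex numbers are represented by pairs (real part, imaginary part).
   For u = a + i b, the equation u_tx = u - i |u|^2 u_x reads
     a_tx = a + (a^2 + b^2) b_x,
     b_tx = b - (a^2 + b^2) a_x.
   [solves_eq a b] says the function u(x,t) = a(x,t) + i b(x,t) has the
   partial derivatives u_x, u_t, u_tx := d/dx (d/dt u) everywhere and
   satisfies the equation. *)
Definition solves_eq (a b : R -> R -> R) : Prop :=
  exists ax bx at_ bt atx btx : R -> R -> R,
    (forall x t, derivable_pt_lim (fun z => a z t) x (ax x t)) /\
    (forall x t, derivable_pt_lim (fun z => b z t) x (bx x t)) /\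
    (forall x t, derivable_pt_lim (fun s => a x s) t (at_ x t)) /\
    (forall x t, derivable_pt_lim (fun s => b x s) t (bt x t)) /\
    (forall x t, derivable_pt_lim (fun z => at_ z t) x (atx x t)) /\
    (forall x t, derivable_pt_lim (fun z => bt z t) x (btx x t)) /\
    (forall x t, atx x t = a x t + (a x t ^ 2 + b x t ^ 2) * bx x t) /\
    (forall x t, btx x t = b x t - (a x t ^ 2 + b x t ^ 2) * ax x t).

Definition Vpot (c k Om A B p : R) : R :=
  let c3 := 4 * c * k - 4 * Om in
  let c2 := 4 * (c ^ 2 * k ^ 2 + Om ^ 2 + 2 * A + c * (4 - 2 * k * Om)) in
  let c1 := - 32 * B * c in
  let c0 := 16 * A ^ 2 in
  (p ^ 8 + c3 * p ^ 6 + c2 * p ^ 4 + c1 * p ^ 2 + c0) / p ^ 2.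

(* Writing u = phi(y) e^{i psi} with psi = k x - Om t + theta(y), y = x - c t,
   the equation becomes (U + i W) e^{i psi} = 0 where, with p = phi, q = theta,
     U = -c p'' + c p q'^2 + (Om + c k) p q' + k Om p - p - p^3 q' - k p^3,
     W = -c (2 p' q' + p q'') - (Om + c k) p' + p^2 p'.
   Since e^{i psi} is a unit, U = W = 0 (the profile equations).  Both have
   first integrals:  p W is the derivative of
     -c p^2 q' - (Om + c k) p^2 / 2 + p^4 / 4 =: -A,
   which solved for q' gives the formula for theta_y; substituting it and the
   equation U = 0 into the derivative of
     16 c^2 p'^2 + p^6 + c3 p^4 + c2 p^2 + 16 A^2 / p^2 =: 32 B c
   shows that this quantity is constant too, which is the energy identity. *)

From Stdlib Require Import Reals Lra.
Open Scope R_scope.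

(* Derivative rules whose result is given up to a provable equation, so that
   they can be chained by [eapply] and the resulting value normalized later. *)

Lemma deriv_eq f x l l' :
  derivable_pt_lim f x l' -> l' = l -> derivable_pt_lim f x l.
Proof. intros H e; subst; exact H. Qed.

Lemma deriv_const a x l : l = 0 -> derivable_pt_lim (fun _ => a) x l.
Proof. intros e; subst; apply derivable_pt_lim_const. Qed.

Lemma deriv_id x l : l = 1 -> derivable_pt_lim (fun z => z) x l.
Proof. intros e; subst; apply derivable_pt_lim_id. Qed.

Lemma deriv_plus f g x a b l :
  derivable_pt_lim f x a -> derivable_pt_lim g x b -> l = a + b ->
  derivable_pt_lim (fun z => f z + g z) x l.
Proof. intros Hf Hg e; subst; exact (derivable_pt_lim_plus f g x a b Hf Hg). Qed.

Lemma deriv_minus f g x a b l :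
  derivable_pt_lim f x a -> derivable_pt_lim g x b -> l = a - b ->
  derivable_pt_lim (fun z => f z - g z) x l.
Proof. intros Hf Hg e; subst; exact (derivable_pt_lim_minus f g x a b Hf Hg). Qed.

Lemma deriv_mult f g x a b l :
  derivable_pt_lim f x a -> derivable_pt_lim g x b -> l = a * g x + f x * b ->
  derivable_pt_lim (fun z => f z * g z) x l.
Proof. intros Hf Hg e; subst; exact (derivable_pt_lim_mult f g x a b Hf Hg). Qed.

Lemma deriv_div f g x a b l :
  derivable_pt_lim f x a -> derivable_pt_lim g x b -> g x <> 0 ->
  l = (a * g x - b * f x) / g x ^ 2 ->
  derivable_pt_lim (fun z => f z / g z) x l.
Proof.
  intros Hf Hg Hg0 e; subst.
  eapply deriv_eq; [exact (derivable_pt_lim_div f g x a b Hf Hg Hg0) |].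
  unfold Rsqr; simpl; field; exact Hg0.
Qed.

Lemma deriv_comp f g g' x a l :
  derivable_pt_lim f x a -> (forall y, derivable_pt_lim g y (g' y)) ->
  l = g' (f x) * a -> derivable_pt_lim (fun z => g (f z)) x l.
Proof. intros Hf Hg e; subst; exact (derivable_pt_lim_comp f g x a _ Hf (Hg _)). Qed.

Lemma deriv_cos f x a l :
  derivable_pt_lim f x a -> l = - sin (f x) * a ->
  derivable_pt_lim (fun z => cos (f z)) x l.
Proof. intros Hf; apply (deriv_comp f cos (fun y => - sin y) x a l Hf derivable_pt_lim_cos). Qed.

Lemma deriv_sin f x a l :
  derivable_pt_lim f x a -> l = cos (f x) * a ->
  derivable_pt_lim (fun z => sin (f z)) x l.
Proof. intros Hf; apply (deriv_comp f sin cos x a l Hf derivable_pt_lim_sin). Qed.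

Lemma deriv_pow f x a n l :
  derivable_pt_lim f x a -> l = INR n * f x ^ pred n * a ->
  derivable_pt_lim (fun z => f z ^ n) x l.
Proof.
  intros Hf.
  apply (deriv_comp f (fun y => y ^ n) (fun y => INR n * y ^ pred n) x a l Hf).
  intro y; apply derivable_pt_lim_pow.
Qed.

Ltac differentiate_step :=
  match goal with
  | |- derivable_pt_lim (fun _ => ?a) _ _ => eapply (deriv_const a)
  | |- derivable_pt_lim (fun z => z) _ _ => eapply deriv_id
  | |- derivable_pt_lim (fun z => @?f z * @?g z) _ _ => eapply (deriv_mult f g)
  | |- derivable_pt_lim (fun z => @?f z / @?g z) _ _ => eapply (deriv_div f g)
  | |- derivable_pt_lim (fun z => @?f z + @?g z) _ _ => eapply (deriv_plus f g)
  | |- derivable_pt_lim (fun z => @?f z - @?g z) _ _ => eapply (deriv_minus f g)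
  | |- derivable_pt_lim (fun z => cos (@?f z)) _ _ => eapply (deriv_cos f)
  | |- derivable_pt_lim (fun z => sin (@?f z)) _ _ => eapply (deriv_sin f)
  | |- derivable_pt_lim (fun z => @?f z ^ ?n) _ _ => eapply (deriv_pow f _ _ n)
  | |- derivable_pt_lim (fun z => ?g (@?f z)) _ _ =>
      match goal with
      | H : forall y, derivable_pt_lim g y (@?g' y) |- _ =>
          eapply (deriv_comp f g g'); [ | exact H | ]
      end
  end.

(* Reduce [derivable_pt_lim f x l] to the equation [f'(x) = l], where f'(x)
   is the mechanically computed derivative; nonvanishing side conditions of
   quotient rules are left to the caller. *)
Ltac differentiate :=
  eapply deriv_eq; [ repeat differentiate_step; try reflexivity | ].

Lemma derivative_zero_constant f :
  (forall x, derivable_pt_lim f x 0) -> forall x, f x = f 0.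
Proof.
  intros H x.
  assert (pr : derivable f) by (intro y; exists 0; apply H).
  apply (null_derivative_1 f pr); intro y.
  unfold derive_pt; destruct (pr y) as [l Hl]; simpl.
  exact (uniqueness_limite f y l 0 Hl (H y)).
Qed.

(* A complex number U + i W multiplied by a unit C + i S vanishes only if it
   vanishes itself; stated for real and imaginary parts. *)
Lemma rotation_kernel C S U W :
  C ^ 2 + S ^ 2 = 1 -> C * U - S * W = 0 -> S * U + C * W = 0 ->
  U = 0 /\ W = 0.
Proof.
  intros Hunit Hre Him; split.
  - replace U with (U * (C ^ 2 + S ^ 2)) by (rewrite Hunit; ring).
    transitivity (C * (C * U - S * W) + S * (S * U + C * W)); [ring |].
    rewrite Hre, Him; ring.
  - replace W with (W * (C ^ 2 + S ^ 2)) by (rewrite Hunit; ring).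
    transitivity (C * (S * U + C * W) - S * (C * U - S * W)); [ring |].
    rewrite Hre, Him; ring.
Qed.

Lemma cos_sin_unit a : cos a ^ 2 + sin a ^ 2 = 1.
Proof. pose proof (sin2_cos2 a) as H; unfold Rsqr in H; simpl; lra. Qed.

(* The real and imaginary parts U = 0, W = 0 of the reduced profile equation
   (p, p1, p2 are phi and its derivatives, q1, q2 those of theta). *)
Definition amplitude_equation (k Om c p p2 q1 : R) : Prop :=
  - c * p2 + c * p * q1 ^ 2 + (Om + c * k) * p * q1 + k * Om * p - p
    - p ^ 3 * q1 - k * p ^ 3 = 0.

Definition phase_equation (k Om c p p1 q1 q2 : R) : Prop :=
  - c * (2 * p1 * q1 + p * q2) - (Om + c * k) * p1 + p ^ 2 * p1 = 0.

Section TravellingWave.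

Variables (k Om c : R) (p p1 p2 q q1 q2 : R -> R).
Hypotheses (dp : forall y, derivable_pt_lim p y (p1 y))
           (dp1 : forall y, derivable_pt_lim p1 y (p2 y))
           (dq : forall y, derivable_pt_lim q y (q1 y))
           (dq1 : forall y, derivable_pt_lim q1 y (q2 y)).

Lemma wave_re_dx x t :
  derivable_pt_lim (fun z => p (z - c * t) * cos (k * z - Om * t + q (z - c * t))) x
    (p1 (x - c * t) * cos (k * x - Om * t + q (x - c * t))
     - p (x - c * t) * sin (k * x - Om * t + q (x - c * t)) * (k + q1 (x - c * t))).
Proof. differentiate; ring. Qed.

Lemma wave_im_dx x t :
  derivable_pt_lim (fun z => p (z - c * t) * sin (k * z - Om * t + q (z - c * t))) x
    (p1 (x - c * t) * sin (k * x - Om * t + q (x - c * t))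
     + p (x - c * t) * cos (k * x - Om * t + q (x - c * t)) * (k + q1 (x - c * t))).
Proof. differentiate; ring. Qed.

Lemma wave_re_dt x t :
  derivable_pt_lim (fun s => p (x - c * s) * cos (k * x - Om * s + q (x - c * s))) t
    (- c * p1 (x - c * t) * cos (k * x - Om * t + q (x - c * t))
     + p (x - c * t) * sin (k * x - Om * t + q (x - c * t)) * (Om + c * q1 (x - c * t))).
Proof. differentiate; ring. Qed.

Lemma wave_im_dt x t :
  derivable_pt_lim (fun s => p (x - c * s) * sin (k * x - Om * s + q (x - c * s))) t
    (- c * p1 (x - c * t) * sin (k * x - Om * t + q (x - c * t))
     - p (x - c * t) * cos (k * x - Om * t + q (x - c * t)) * (Om + c * q1 (x - c * t))).
Proof. differentiate; ring. Qed.

Lemma wave_re_dtx x t :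
  derivable_pt_lim
    (fun z => - c * p1 (z - c * t) * cos (k * z - Om * t + q (z - c * t))
              + p (z - c * t) * sin (k * z - Om * t + q (z - c * t)) * (Om + c * q1 (z - c * t))) x
    (- c * p2 (x - c * t) * cos (k * x - Om * t + q (x - c * t))
     + c * p1 (x - c * t) * sin (k * x - Om * t + q (x - c * t)) * (k + q1 (x - c * t))
     + p1 (x - c * t) * sin (k * x - Om * t + q (x - c * t)) * (Om + c * q1 (x - c * t))
     + p (x - c * t) * cos (k * x - Om * t + q (x - c * t)) * (k + q1 (x - c * t))
         * (Om + c * q1 (x - c * t))
     + p (x - c * t) * sin (k * x - Om * t + q (x - c * t)) * (c * q2 (x - c * t))).
Proof. differentiate; ring. Qed.

Lemma wave_im_dtx x t :
  derivable_pt_lim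
    (fun z => - c * p1 (z - c * t) * sin (k * z - Om * t + q (z - c * t))
              - p (z - c * t) * cos (k * z - Om * t + q (z - c * t)) * (Om + c * q1 (z - c * t))) x
    (- c * p2 (x - c * t) * sin (k * x - Om * t + q (x - c * t))
     - c * p1 (x - c * t) * cos (k * x - Om * t + q (x - c * t)) * (k + q1 (x - c * t))
     - p1 (x - c * t) * cos (k * x - Om * t + q (x - c * t)) * (Om + c * q1 (x - c * t))
     + p (x - c * t) * sin (k * x - Om * t + q (x - c * t)) * (k + q1 (x - c * t))
         * (Om + c * q1 (x - c * t))
     - p (x - c * t) * cos (k * x - Om * t + q (x - c * t)) * (c * q2 (x - c * t))).
Proof. differentiate; ring. Qed.

(* If the ansatz solves the equation, its profile satisfies the profile
   equations at every point: identify the partial derivatives with the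
   formulas above and split the equation along e^{i psi}. *)
Lemma wave_profile_equations :
  solves_eq
    (fun x t => p (x - c * t) * cos (k * x - Om * t + q (x - c * t)))
    (fun x t => p (x - c * t) * sin (k * x - Om * t + q (x - c * t))) ->
  forall x t,
    amplitude_equation k Om c (p (x - c * t)) (p2 (x - c * t)) (q1 (x - c * t)) /\
    phase_equation k Om c (p (x - c * t)) (p1 (x - c * t)) (q1 (x - c * t)) (q2 (x - c * t)).
Proof.
  intros (ax & bx & at_ & bt & atx & btx & Hax & Hbx & Hat & Hbt & Hatx & Hbtx & E1 & E2) x t.
  specialize (E1 x t); specialize (E2 x t); cbv beta in E1, E2.
  rewrite (uniqueness_limite _ _ _ _ (Hax x t) (wave_re_dx x t)) in E2.
  rewrite (uniqueness_limite _ _ _ _ (Hbx x t) (wave_im_dx x t)) in E1.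
  rewrite (uniqueness_limite _ _ _ _ (Hatx x t)
             (derivable_pt_lim_ext _ _ _ _ (fun z => eq_sym (uniqueness_limite _ _ _ _
                (Hat z t) (wave_re_dt z t))) (wave_re_dtx x t))) in E1.
  rewrite (uniqueness_limite _ _ _ _ (Hbtx x t)
             (derivable_pt_lim_ext _ _ _ _ (fun z => eq_sym (uniqueness_limite _ _ _ _
                (Hbt z t) (wave_im_dt z t))) (wave_im_dtx x t))) in E2.
  pose proof (cos_sin_unit (k * x - Om * t + q (x - c * t))) as Hunit.
  set (C := cos (k * x - Om * t + q (x - c * t))) in *.
  set (S := sin (k * x - Om * t + q (x - c * t))) in *.
  assert (Habs : (p (x - c * t) * C) ^ 2 + (p (x - c * t) * S) ^ 2 = p (x - c * t) ^ 2).
  { transitivity (p (x - c * t) ^ 2 * (C ^ 2 + S ^ 2)); [ring | rewrite Hunit; ring]. }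
  rewrite Habs in E1, E2.
  unfold amplitude_equation, phase_equation.
  apply (rotation_kernel C S); [exact Hunit | lra | lra].
Qed.

End TravellingWave.

Section ProfileIntegrals.

Variables (k Om c : R) (p p1 p2 q1 q2 : R -> R).
Hypotheses (Hc : c <> 0) (Hp : forall y, p y <> 0)
           (dp : forall y, derivable_pt_lim p y (p1 y))
           (dp1 : forall y, derivable_pt_lim p1 y (p2 y))
           (dq1 : forall y, derivable_pt_lim q1 y (q2 y))
           (Hamp : forall y, amplitude_equation k Om c (p y) (p2 y) (q1 y))
           (Hphase : forall y, phase_equation k Om c (p y) (p1 y) (q1 y) (q2 y)).

(* The phase equation times p is exact: its integral gives theta_y. *)
Lemma phase_first_integral :
  exists A, forall y,
    q1 y = (p y ^ 4 - 2 * c * k * p y ^ 2 - 2 * Om * p y ^ 2 + 4 * A)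
           / (4 * c * p y ^ 2).
Proof.
  pose (F := fun z => - c * (p z ^ 2 * q1 z) - (Om + c * k) * p z ^ 2 / 2 + p z ^ 4 / 4).
  assert (F_const : forall z, F z = F 0).
  { apply derivative_zero_constant; intro z; unfold F.
    differentiate.
    - apply (Rgt_not_eq 2 0); lra.
    - apply (Rgt_not_eq 4 0); lra.
    - pose proof (Hphase z) as W; unfold phase_equation in W.
      transitivity (p z * (- c * (2 * p1 z * q1 z + p z * q2 z)
                            - (Om + c * k) * p1 z + p z ^ 2 * p1 z)).
      + simpl; field.
      + rewrite W; ring. }
  exists (- F 0); intro y.
  rewrite <- (F_const y); unfold F.
  field; split; [apply Hp | exact Hc].
Qed.

(* With theta_y eliminated and p'' given by the amplitude equation, the
   energy 16 c^2 p'^2 + p^6 + c3 p^4 + c2 p^2 + c0 / p^2 is conserved. *)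
Lemma amplitude_first_integral A :
  (forall y, q1 y = (p y ^ 4 - 2 * c * k * p y ^ 2 - 2 * Om * p y ^ 2 + 4 * A)
                    / (4 * c * p y ^ 2)) ->
  exists B, forall y, p1 y ^ 2 = - (1 / (16 * c ^ 2)) * Vpot c k Om A B (p y).
Proof.
  intros Hq1.
  pose (E := fun z => 16 * c ^ 2 * p1 z ^ 2 + p z ^ 6 + (4 * c * k - 4 * Om) * p z ^ 4
      + 4 * (c ^ 2 * k ^ 2 + Om ^ 2 + 2 * A + c * (4 - 2 * k * Om)) * p z ^ 2
      + 16 * A ^ 2 / p z ^ 2).
  assert (E_const : forall z, E z = E 0).
  { apply derivative_zero_constant; intro z; unfold E.
    differentiate; [apply pow_nonzero, Hp |].
    assert (Hp2 : p2 z = (c * p z * q1 z ^ 2 + (Om + c * k) * p z * q1 z + k * Om * p z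
                          - p z - p z ^ 3 * q1 z - k * p z ^ 3) / c).
    { pose proof (Hamp z) as U; unfold amplitude_equation in U.
      apply (Rmult_eq_reg_l c); [field_simplify; lra | exact Hc]. }
    rewrite Hp2, Hq1; simpl; field; split; [apply Hp | exact Hc]. }
  exists (E 0 / (32 * c)); intro y.
  unfold Vpot; rewrite <- (E_const y); unfold E.
  field; split; [apply Hp | exact Hc].
Qed.

End ProfileIntegrals.

Theorem mainTheorem4 (k Om c : R) (phi theta : R -> R) :
  c <> 0 ->
  smooth phi -> smooth theta ->
  (forall y, phi y <> 0) ->
  solves_eq
    (fun x t => phi (x - c * t) * cos (k * x - Om * t + theta (x - c * t)))
    (fun x t => phi (x - c * t) * sin (k * x - Om * t + theta (x - c * t))) ->
  exists A B : R,
    (forall y,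
       derivable_pt_lim theta y
         ((phi y ^ 4 - 2 * c * k * phi y ^ 2 - 2 * Om * phi y ^ 2 + 4 * A)
            / (4 * c * phi y ^ 2))) /\
    (forall y dphi, derivable_pt_lim phi y dphi ->
       dphi ^ 2 = - (1 / (16 * c ^ 2)) * Vpot c k Om A B (phi y)).
Proof.
  intros Hc [P [HP0 HP]] [Q [HQ0 HQ]] Hnz Hsol; subst phi theta.
  (* The profile equations hold at every y = y - c * 0. *)
  assert (Heqs : forall y,
            amplitude_equation k Om c (P 0%nat y) (P 2%nat y) (Q 1%nat y) /\
            phase_equation k Om c (P 0%nat y) (P 1%nat y) (Q 1%nat y) (Q 2%nat y)).
  { intro y.
    pose proof (wave_profile_equations k Om c _ _ _ _ _ _
                  (HP 0%nat) (HP 1%nat) (HQ 0%nat) (HQ 1%nat) Hsol y 0) as H.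
    replace (y - c * 0) with y in H by ring; exact H. }
  destruct (phase_first_integral k Om c (P 0%nat) (P 1%nat) (Q 1%nat) (Q 2%nat)
              Hc Hnz (HP 0%nat) (HQ 1%nat) (fun y => proj2 (Heqs y))) as [A HA].
  destruct (amplitude_first_integral k Om c (P 0%nat) (P 1%nat) (P 2%nat) (Q 1%nat)
              Hc Hnz (HP 0%nat) (HP 1%nat) (fun y => proj1 (Heqs y)) A HA) as [B HB].
  exists A, B; split.
  - intro y; rewrite <- HA; apply HQ.
  - intros y dphi Hd.
    rewrite (uniqueness_limite _ _ _ _ Hd (HP 0%nat y)); apply HB.
Qed.
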